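(* Let $m\geq1$ and $e\geq0$ with $m\equiv 2^e-1 \pmod{2^{e+1}}$ (i.e. $e$ is the length of the final block of consecutive ones in the binary expansion of $m$; $e=0$ iff $m$ is even). Then $G(m)\leq 2^e-1$, with equality if $m$ is even or if $m=2^e-1$. In fact $G(m,s)\leq 2^e-1$ for all $s\geq\max\{(m+1)/2^e,2\}$. Specifically, if $m>2^e-1$ and $\sigma=(m+1)/2^e$ (an integer greater than $2$), then the product of $\sigma$-th zero-divisors $$(x_1+x_\sigma)^{m+2^e}(x_2+x_\sigma)^{m+2^e}\cdots(x_{\sigma-1}+x_\sigma)^{m+2^e}\in H^*((\mathbb{R}\mathrm{P}^m)^{\times\sigma};\mathbb{Z}_2)$$ is nonzero.
   Context: $H^*((\mathbb{R}\mathrm{P}^m)^{\times s};\mathbb{Z}_2)=\mathbb{Z}_2[x_1,\ldots,x_s]/(x_i^{m+1})$ with $x_i$ the pullback of the generator of $H^1(\mathbb{R}\mathrm{P}^m;\mathbb{Z}_2)$ under the $i$-th projection. The $s$-th zero-divisors are the elements of the kernel of the map $\Delta_s^*$ induced by the diagonal $\mathbb{R}\mathrm{P}^m\to(\mathbb{R}\mathrm{P}^m)^{\times s}$, and $\operatorname{zcl}_s(\mathbb{R}\mathrm{P}^m)$ is the maximal number of $s$-th zero-divisors with nonzero product. $G(m,s)=sm-\operatorname{zcl}_s(\mathbb{R}\mathrm{P}^m)$; the sequence $G(m,2)\geq G(m,3)\geq\cdots\geq0$ is non-increasing, and $G(m)$ denotes its eventual (stable) value. *)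

From mathcomp Require Import all_boot all_order all_algebra.
From mathcomp Require Import mpoly.
From Stdlib Require Import ClassicalDescription.
Set Implicit Arguments. Unset Strict Implicit. Unset Printing Implicit Defensive.
Import Order.TTheory GRing.Theory Num.Theory.
Local Open Scope ring_scope.

(* H^*((RP^m)^s; Z_2) = Z_2[x_1..x_s]/(x_i^{m+1}).  Elements are represented by
   polynomials in {mpoly 'F_2[s]} (variable x_{i+1} is 'X_i, i : 'I_s). *)

Definition in_trunc_ideal (m s : nat) (p : {mpoly 'F_2[s]}) : Prop :=
  exists q : 'I_s -> {mpoly 'F_2[s]}, p = \sum_(i < s) q i * 'X_i ^+ m.+1.

Definition diag_rep (s : nat) (p : {mpoly 'F_2[s]}) : {poly 'F_2} :=
  mmap (@polyC 'F_2) (fun _ : 'I_s => 'X) p.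

(* s-th zero-divisor: Delta_s^*(p) = 0 in Z_2[x]/(x^{m+1}) = H^*(RP^m;Z_2). *)
Definition zero_divisor (m s : nat) (p : {mpoly 'F_2[s]}) : Prop :=
  ('X ^+ m.+1 %| diag_rep p)%R.

Definition zcl_witness (m s k : nat) : Prop :=
  exists f : 'I_k -> {mpoly 'F_2[s]},
    (forall i, @zero_divisor m s (f i)) /\
    ~ @in_trunc_ideal m s (\prod_(i < k) f i).

Definition zcl_witnessb (m s k : nat) : bool :=
  if excluded_middle_informative (zcl_witness m s k) then true else false.

(* Any product of more than s*m zero-divisors
   vanishes (zero-divisors have no constant term, and the top degree of
   H^*((RP^m)^s) is s*m), so the maximum over k <= s*m is the true maximum. *)
Definition zcl (m s : nat) : nat :=
  (\max_(k < (s * m).+1 | zcl_witnessb m s k) k)%N.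

Definition G (m s : nat) : nat := (s * m - zcl m s)%N.

Definition G_stable (m g : nat) : Prop :=
  exists s0 : nat, forall s : nat, (s0 <= s)%N -> G m s = g.

From mathcomp Require Import all_boot all_order all_algebra.
From mathcomp Require Import mpoly.
From mathcomp Require Import zify.
From Stdlib Require Import Classical ClassicalDescription.
Set Implicit Arguments. Unset Strict Implicit. Unset Printing Implicit Defensive.
Import GRing.Theory.
Local Open Scope ring_scope.

(* Write m + 1 = sigma 2^e with sigma odd.  Each x_i + x_sigma is a zero-divisor, and in the
   product of the (x_i + x_sigma)^(m + 2^e), i < sigma, the monomial
   x_1^m ... x_(sigma-1)^m x_sigma^((sigma-1) 2^e) has coefficient binomial(m + 2^e, m)^(sigma-1),
   which is odd by Lucas' theorem.  As (sigma-1) 2^e <= m, this monomial survives truncation, so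
   zcl_sigma >= (sigma-1)(m + 2^e), that is G(m, sigma) <= 2^e - 1.  Multiplying a product of
   zero-divisors in s variables by (x_(s+1) + x_1)^m shows zcl_(s+1) >= zcl_s + m, so G(m, s) is
   non-increasing in s, hence eventually constant.
   When m + 1 = 2^e, the substitution x_i -> x_i + x_1 (i > 1) preserves the ideal (x_i^(m+1)),
   since (x_i + x_1)^(2^e) = x_i^(2^e) + x_1^(2^e), and it turns each zero-divisor into a
   polynomial whose monomials have positive degree in x_2, ..., x_s or are divisible by
   x_1^(m+1).  A product of more than (s-1) m such polynomials vanishes, so G(m, s) >= m. *)

Lemma odd_bin_double n k :
  odd 'C(n.*2, k.*2) = odd 'C(n, k) /\ ~~ odd 'C(n.*2, (k.*2).+1).
Proof.
elim: n k => [|n IHn] k; first by rewrite double0 !bin0n double_eq0; case: k.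
rewrite doubleS; case: k => [|k]; first by rewrite !bin0 bin1 /= odd_double.
have [even_k odd_k] := IHn k; have [even_kS odd_kS] := IHn k.+1.
rewrite doubleS in even_kS odd_kS *; rewrite !binS !oddD.
by rewrite even_kS even_k (negbTE odd_k) (negbTE odd_kS); case: (odd _); case: (odd _).
Qed.

Lemma odd_bin_doubleS n k : odd 'C((n.*2).+1, k.*2) = odd 'C(n, k).
Proof.
case: k => [|k]; first by rewrite !bin0.
have [_ odd1] := odd_bin_double n k; have [even1 _] := odd_bin_double n k.+1.
by rewrite doubleS binS oddD even1 (negbTE odd1) addbF.
Qed.

Lemma odd_bin_pow2 e j : odd j -> odd 'C(j * 2 ^ e + (2 ^ e - 1), 2 ^ e).
Proof.
elim: e => [|e IHe] oj; first by rewrite expn0 muln1 subnn addn0 bin1.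
have -> : (j * 2 ^ e.+1 + (2 ^ e.+1 - 1) = ((j * 2 ^ e + (2 ^ e - 1)).*2).+1)%N.
  by rewrite expnS -!muln2; lia.
by rewrite expnS mul2n odd_bin_doubleS IHe.
Qed.

Lemma trailing_ones_decomp m e :
  (m %% 2 ^ e.+1 = 2 ^ e - 1)%N ->
  (m + 1 = (m + 1) %/ 2 ^ e * 2 ^ e)%N /\ odd ((m + 1) %/ 2 ^ e).
Proof.
move=> m_mod; have -> : (m + 1 = (m %/ 2 ^ e.+1).*2.+1 * 2 ^ e)%N.
  by rewrite {1}(divn_eq m (2 ^ e.+1)) m_mod expnS -muln2; lia.
by rewrite mulnK ?expn_gt0 //= odd_double.
Qed.

Lemma odd_bin_trailing_ones m e :
  (m %% 2 ^ e.+1 = 2 ^ e - 1)%N -> odd 'C(m + 2 ^ e, m).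
Proof.
move=> /trailing_ones_decomp [m1 odd_sigma].
rewrite -bin_sub ?leq_addr // addKn.
have -> : (m + 2 ^ e = (m + 1) %/ 2 ^ e * 2 ^ e + (2 ^ e - 1))%N by rewrite -m1; lia.
exact: odd_bin_pow2.
Qed.

Section CoeffExtraction.
Variables (R : comRingType) (n : nat).
Implicit Types (p q : {mpoly R[n]}) (mu nu : 'X_{1..n}).

Lemma mcoeffMX_le p nu mu :
  (p * 'X_[nu])@_mu = if (nu <= mu)%MM then p@_(mu - nu) else 0.
Proof.
case: ifP => [le_nu|]; first by rewrite -{1}(submK le_nu) addmC mcoeffMX.
move=> not_le; apply: memN_msupp_eq0; apply: contraFN not_le.
by rewrite (perm_mem (msuppMX p nu)) => /mapP [mu' _ ->]; apply: lem_addr.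
Qed.

Definition var_free (i : 'I_n) p := forall nu, nu \in msupp p -> nu i = 0%N.

Lemma var_free1 i : var_free i 1.
Proof. by move=> nu; rewrite msupp1 inE => /eqP ->; rewrite mnm0E. Qed.

Lemma var_freeX i j : j != i -> var_free i 'X_j.
Proof. by move=> ji nu; rewrite msuppX inE => /eqP ->; rewrite mnm1E (negbTE ji). Qed.

Lemma var_freeD i p q : var_free i p -> var_free i q -> var_free i (p + q).
Proof. by move=> fp fq nu /msuppD_le; rewrite mem_cat => /orP [/fp|/fq]. Qed.

Lemma var_freeM i p q : var_free i p -> var_free i q -> var_free i (p * q).
Proof.
move=> fp fq nu /msuppM_le /allpairsP [[mu1 mu2] /= [in1 in2 ->]].
by rewrite mnmDE fp ?fq.
Qed.

Lemma var_freeXn i p k : var_free i p -> var_free i (p ^+ k).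
Proof.
move=> fp; elim: k => [|k IHk]; first by rewrite expr0; apply: var_free1.
by rewrite exprS; apply: var_freeM.
Qed.

Lemma mcoeffM_addX_pow p (i c : 'I_n) N mu :
  i != c -> var_free i p -> (mu i <= N)%N -> (N - mu i <= mu c)%N ->
  (p * ('X_i + 'X_c) ^+ N)@_mu =
    'C(N, mu i)%:R * p@_(mu - U_(i) *+ mu i - U_(c) *+ (N - mu i)).
Proof.
move=> ic fp le_N le_c; have ci : (c == i) = false by rewrite eq_sym (negbTE ic).
rewrite addrC exprDn mulr_sumr raddf_sum /=.
rewrite (bigD1 (Ordinal (leq_ltn_trans le_N (ltnSn N)))) //=.
rewrite big1 ?addr0 => [|j /= /negbTE j_neq].
  rewrite mulrnAr mcoeffMn !mpolyXn -mpolyXD mcoeffMX_le.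
  have -> : (U_(c) *+ (N - mu i) + U_(i) *+ mu i <= mu)%MM.
    apply/mnm_lepP => l; rewrite mnmDE !mulmnE !mnm1E.
    case: (eqVneq c l) => [<-|cl]; first by rewrite (negbTE ic) mul1n mul0n addn0.
    by case: (eqVneq i l) => [<-|il]; rewrite ?mul0n ?mul1n.
  by rewrite submDA (addmC (U_(i) *+ mu i)%MM) mulr_natl.
rewrite mulrnAr mcoeffMn !mpolyXn -mpolyXD mcoeffMX_le.
case: ifP => [/mnm_lepP le_mu|]; last by rewrite mul0rn.
suff -> : p@_(mu - (U_(c) *+ (N - j) + U_(i) *+ j)%MM) = 0 by rewrite mul0rn.
apply: memN_msupp_eq0; apply/negP => /fp.
have := le_mu i; rewrite mnmBE mnmDE !mulmnE !mnm1E ci eqxx mul0n mul1n add0n.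
by move: j_neq; rewrite -val_eqE /=; lia.
Qed.

End CoeffExtraction.

Lemma var_free_mwiden (R : comRingType) n (p : {mpoly R[n]}) : var_free ord_max (mwiden p).
Proof.
move=> nu; apply: contraTeq => nu_max; rewrite -mcoeff_eq0.
rewrite (mwidenE (k := msize p)) // raddf_sum /= big1 // => mu _.
rewrite mcoeffZ mcoeffX; case: eqP => [nuE|]; rewrite ?mulr0 //.
by move: nu_max; rewrite -nuE mnmwiden_ordmax.
Qed.

Lemma mmap_mmapC (R S : comRingType) (n k : nat) (f : {rmorphism R -> S})
    (g : 'I_n -> {mpoly R[k]}) (h : 'I_k -> S) (h' : 'I_n -> S) :
  (forall i, mmap f h (g i) = h' i) ->
  forall p, mmap f h (mmap (@mpolyC k R) g p) = mmap f h' p.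
Proof.
move=> gh p; rewrite [mmap _ g p]/mmap raddf_sum /=; apply: eq_bigr => mu _.
rewrite rmorphM /= mmapC rmorph_prod /=; congr (_ * _); apply: eq_bigr => i _.
by rewrite rmorphXn /= gh.
Qed.

Section ProdCoeff.
Variables (R : comRingType) (t a b : nat).
Local Notation N := (a + b)%N.
Local Notation Xt := ('X_(@ord_max t) : {mpoly R[t.+1]}).

Let staircase (j : nat) : 'X_{1..t.+1} :=
  [multinom if (i < j)%N then a else if (i == t :> nat) then (j * b)%N else 0%N | i < t.+1].

Lemma mcoeff_prod_addXmax_prefix j : (j <= t)%N ->
  (\prod_(0 <= i < j) ('X_(inord i) + Xt) ^+ N)@_(staircase j) = 'C(N, a)%:R ^+ j.
Proof.
elim: j => [|j IHj] lt_jt.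
  rewrite big_geq // mcoeff1 expr0; suff -> : staircase 0 = 0%MM by rewrite eqxx.
  by apply/mnmP => i; rewrite mnmE mnm0E mul0n; case: ifP.
have val_j : nat_of_ord (inord j : 'I_t.+1) = j by rewrite inordK // leqW.
have j_max : (inord j : 'I_t.+1) != ord_max by rewrite -val_eqE /= val_j neq_ltn lt_jt.
have stair_j : staircase j.+1 (inord j) = a by rewrite mnmE val_j ltnSn.
rewrite big_nat_recr //= mcoeffM_addX_pow // ?stair_j ?leq_addr //; first last.
- by rewrite addKn mnmE /= eqxx ltnNge lt_jt /= mulSn leq_addr.
- rewrite big_seq; apply: big_ind => [|p q|i]; [exact: var_free1|exact: var_freeM|].
  rewrite mem_index_iota => /andP [_ lt_ij]; apply/var_freeXn/var_freeD; apply: var_freeX.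
  - by rewrite -val_eqE /= !inordK ?neq_ltn ?lt_ij //; lia.
  - by rewrite eq_sym.
rewrite addKn exprS -(IHj (ltnW lt_jt)); congr (_ * mcoeff _ _).
apply/mnmP => i; rewrite !mnmBE !mulmnE !mnm1E !mnmE.
rewrite -[inord j == i]val_eqE -[ord_max == i]val_eqE /= val_j.
move: (nat_of_ord i) (ltn_ord i) => v lt_vt.
by do ?[case: ifP => [?|/negbT ?]]; do ?[case: eqP => ?]; lia.
Qed.

Lemma mcoeff_prod_addXmax :
  (\prod_(i < t) ('X_(widen_ord (leqnSn t) i) + Xt) ^+ N)
    @_[multinom if (i < t)%N then a else (t * b)%N | i < t.+1] = 'C(N, a)%:R ^+ t.
Proof.
have -> : [multinom if (i < t)%N then a else (t * b)%N | i < t.+1] = staircase t.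
  apply/mnmP => i; rewrite !mnmE; case: ifP => // /negbT; rewrite -leqNgt => le_ti.
  by rewrite eqn_leq le_ti -ltnS ltn_ord.
rewrite -(mcoeff_prod_addXmax_prefix (leqnn t)) big_mkord; congr (mcoeff _ _).
apply: eq_bigr => i _; congr (('X__ + _) ^+ _).
by apply: val_inj; rewrite /= inordK // ltnS ltnW.
Qed.

End ProdCoeff.

Lemma pchar_F2_lalg (A : lalgType 'F_2) : (2 \in [pchar A])%N.
Proof. by rewrite pchar_lalg (@pchar_Fp 2). Qed.

Lemma F2_natr n : (n%:R : 'F_2) = (odd n)%:R.
Proof. by rewrite -(@Fp_nat_mod 2) // modn2. Qed.

Section TruncIdeal.
Variables (m s : nat).
Implicit Types (p q : {mpoly 'F_2[s]}) (mu : 'X_{1..s}).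

Lemma trunc_ideal0 : in_trunc_ideal m (0 : {mpoly 'F_2[s]}).
Proof. by exists (fun=> 0); rewrite big1 // => i _; rewrite mul0r. Qed.

Lemma trunc_idealD p q :
  in_trunc_ideal m p -> in_trunc_ideal m q -> in_trunc_ideal m (p + q).
Proof.
case=> a ->; case=> b ->; exists (fun i => a i + b i).
by rewrite -big_split /=; apply: eq_bigr => i _; rewrite mulrDl.
Qed.

Lemma trunc_idealMl q p : in_trunc_ideal m p -> in_trunc_ideal m (q * p).
Proof.
case=> a ->; exists (fun i => q * a i).
by rewrite mulr_sumr; apply: eq_bigr => i _; rewrite mulrA.
Qed.

Lemma trunc_ideal_sum (I : Type) (r : seq I) (F : I -> {mpoly 'F_2[s]}) :
  (forall i, in_trunc_ideal m (F i)) -> in_trunc_ideal m (\sum_(i <- r) F i).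
Proof.
move=> FI; elim: r => [|i r IHr]; first by rewrite big_nil; apply: trunc_ideal0.
by rewrite big_cons; apply: trunc_idealD.
Qed.

Lemma trunc_idealX mu i : (m < mu i)%N -> in_trunc_ideal m ('X_[mu] : {mpoly 'F_2[s]}).
Proof.
move=> lt_m; have le_mu : (U_(i) *+ m.+1 <= mu)%MM.
  apply/mnm_lepP => j; rewrite mulmnE mnm1E.
  by case: eqP => [<-|]; rewrite ?mul1n ?mul0n.
rewrite -(submK le_mu) mpolyXD -mpolyXn.
exists (fun j => if j == i then 'X_[mu - U_(i) *+ m.+1] else 0).
by rewrite (bigD1 i) //= eqxx big1 ?addr0 // => j /negbTE ->; rewrite mul0r.
Qed.

Lemma trunc_idealP p :
  in_trunc_ideal m p <-> (forall mu, (forall i, mu i <= m)%N -> p@_mu = 0).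
Proof.
split=> [[a ->] mu le_mu|coef0].
  rewrite raddf_sum /= big1 // => i _; rewrite mpolyXn mcoeffMX_le.
  case: ifP => // /mnm_lepP /(_ i); rewrite mulmnE mnm1E eqxx mul1n.
  by have := le_mu i; lia.
rewrite (mpolyE p); apply: trunc_ideal_sum => mu.
have [i lt_m|le_mu] := pickP (fun i => m < mu i)%N.
  by rewrite -mul_mpolyC; apply: trunc_idealMl; apply: trunc_idealX lt_m.
by rewrite coef0 ?scale0r; [apply: trunc_ideal0 | move=> i; rewrite leqNgt le_mu].
Qed.

Lemma trunc_idealPn p :
  ~ in_trunc_ideal m p <-> exists2 mu : 'X_{1..s}, (forall i, mu i <= m)%N & p@_mu != 0.
Proof.
rewrite trunc_idealP; split=> [coefN0|[mu le_mu coefN0] coef0]; last first.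
  by rewrite coef0 ?eqxx in coefN0.
apply: NNPP => no_mu; apply: coefN0 => mu le_mu; apply/eqP.
by apply/negPn/negP => coefN0; apply: no_mu; exists mu.
Qed.

End TruncIdeal.



Section ZeroDivisors.
Variables (m s : nat).
Implicit Types (p q : {mpoly 'F_2[s]}).

Lemma diag_repX (i : 'I_s) : diag_rep ('X_i : {mpoly 'F_2[s]}) = 'X.
Proof. by rewrite /diag_rep mmapX mmap1U. Qed.

Lemma zero_divisor_addX (i j : 'I_s) : zero_divisor m ('X_i + 'X_j : {mpoly 'F_2[s]}).
Proof.
rewrite /zero_divisor /diag_rep raddfD /= -!/(diag_rep _) !diag_repX.
by rewrite addrr_pchar2 ?dvdp0 // pchar_F2_lalg.
Qed.

Lemma zero_divisorMr p q : zero_divisor m p -> zero_divisor m (p * q).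
Proof. by rewrite /zero_divisor /diag_rep rmorphM; apply: dvdp_mulr. Qed.

Lemma zero_divisorXn p k : zero_divisor m p -> (0 < k)%N -> zero_divisor m (p ^+ k).
Proof. by case: k => // k zp _; rewrite exprS; apply: zero_divisorMr. Qed.

End ZeroDivisors.

Lemma diag_rep_mwiden s (p : {mpoly 'F_2[s]}) : diag_rep (mwiden p) = diag_rep p.
Proof. by apply: mmap_mmapC => i; rewrite -/(diag_rep _) diag_repX. Qed.

Section ZclBounds.
Variables (m s : nat).

Lemma zcl_witness_seq (l : seq {mpoly 'F_2[s]}) :
  (forall p, p \in l -> zero_divisor m p) -> ~ in_trunc_ideal m (\prod_(p <- l) p) ->
  zcl_witness m s (size l).
Proof.
move=> zl prodN0; exists (fun i => nth 0 l i); split; first by move=> i; apply/zl/mem_nth.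
by rewrite (big_nth 0) big_mkord in prodN0.
Qed.

Lemma zcl_witness0 : zcl_witness m s 0.
Proof.
exists (fun=> 0); split=> [[]//|]; rewrite big_ord0; apply/trunc_idealPn.
by exists 0%MM => [i|]; rewrite ?mnm0E // mcoeff1 eqxx oner_neq0.
Qed.

Lemma zcl_witnessbP k : reflect (zcl_witness m s k) (zcl_witnessb m s k).
Proof. by rewrite /zcl_witnessb; case: excluded_middle_informative => ?; constructor. Qed.

Lemma zcl_leq : (zcl m s <= s * m)%N.
Proof. by apply/bigmax_leqP => i _; rewrite -ltnS. Qed.

Lemma leq_zcl k : zcl_witness m s k -> (k <= s * m)%N -> (k <= zcl m s)%N.
Proof.
move=> wk; rewrite -ltnS => lt_k.
by apply: (@leq_bigmax_cond _ _ _ (Ordinal lt_k)); apply/zcl_witnessbP.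
Qed.

Lemma zcl_witness_zcl : zcl_witness m s (zcl m s).
Proof.
have w0 : zcl_witnessb m s (@ord0 (s * m)) by apply/zcl_witnessbP/zcl_witness0.
rewrite /zcl (bigop.bigmax_eq_arg _ w0); case: arg_maxnP => // i wi _.
exact/zcl_witnessbP.
Qed.

Lemma zcl_leq_bound B : (forall k, zcl_witness m s k -> (k <= B)%N) -> (zcl m s <= B)%N.
Proof. by move=> wB; apply/bigmax_leqP => i /zcl_witnessbP; apply: wB. Qed.

End ZclBounds.


Lemma zcl_widen m s : (zcl m s.+1 + m <= zcl m s.+2)%N.
Proof.
have [f [zf prodN0]] := zcl_witness_zcl m s.+1; set k := zcl m s.+1 in f zf prodN0 *.
pose x0 := widen_ord (leqnSn s.+1) ord0.
pose l := [seq mwiden (f i) | i <- enum 'I_k] ++ nseq m ('X_ord_max + 'X_x0).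
have size_l : size l = (k + m)%N by rewrite size_cat size_map size_enum_ord size_nseq.
rewrite -size_l; apply: leq_zcl; last by rewrite size_l mulSn addnC leq_add2l zcl_leq.
apply: zcl_witness_seq => [p|].
  rewrite mem_cat mem_nseq => /orP [/mapP [i _ ->]|/andP [_ /eqP ->]].
    by rewrite /zero_divisor diag_rep_mwiden; apply: zf.
  exact: zero_divisor_addX.
rewrite big_cat big_nseq iter_mulr_1 big_map big_enum /= -rmorph_prod.
move/trunc_idealPn: prodN0 => [mu le_mu coefN0].
pose nu := (mnmwiden mu + U_(ord_max) *+ m)%MM.
have nu_max : nu ord_max = m by rewrite mnmDE mnmwiden_ordmax mulmnE mnm1E eqxx mul1n.
apply/trunc_idealPn; exists nu => [j|].
  case: (unliftP ord_max j) => [j' ->|->]; last by rewrite nu_max.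
  rewrite mnmDE mulmnE mnm1E (negbTE (neq_lift _ _)) mul0n addn0.
  have -> : lift ord_max j' = widen_ord (leqnSn s.+1) j'.
    by apply: val_inj; rewrite /= /bump leqNgt ltn_ord.
  by rewrite mnmwiden_widen.
rewrite mcoeffM_addX_pow ?nu_max ?subnn //; last exact: var_free_mwiden.
by rewrite binn mul1r mulm0n subm0 addmK mwiden_mnmwiden.
Qed.

Lemma G_noninc m s : (G m s.+2 <= G m s.+1)%N.
Proof. by rewrite /G; have := zcl_widen m s; have := zcl_leq m s.+1; lia. Qed.

Lemma G_antimono m : {homo (fun s => G m s.+1) : s1 s2 / (s1 <= s2)%N >-> (s2 <= s1)%N}.
Proof.
apply: (homo_leq (r := fun a b => (b <= a)%N)) => [//|s1 s2 s3 le21 le32|s].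
  exact: leq_trans le32 le21.
exact: G_noninc.
Qed.

Lemma antitone_eventually_const (f : nat -> nat) :
  {homo f : s1 s2 / (s1 <= s2)%N >-> (s2 <= s1)%N} ->
  exists s0, forall s, (s0 <= s)%N -> f s = f s0.
Proof.
move=> f_anti; suff const_from v a : f a = v -> exists s0, forall s, (s0 <= s)%N -> f s = f s0.
  exact: const_from 0%N erefl.
elim/ltn_ind: v a => v IHv a fa.
have [[b le_ab fb]|const] := classic (exists2 b, (a <= b)%N & f b != f a).
  by apply: (IHv (f b) _ b) => //; rewrite -fa ltn_neqAle fb f_anti.
by exists a => s le_as; apply/eqP/negPn/negP => fs; apply: const; exists s.
Qed.

Lemma G_eventually_const m : exists s0, forall s, (s0 <= s)%N -> G m s = G m s0.
Proof.
have [s0 const] := antitone_eventually_const (G_antimono m).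
by exists s0.+1 => -[|s] // le_s; apply: const.
Qed.

Section ProductWitness.
Variables (m d t : nat).
Hypotheses (odd_bin : odd 'C(m + d, m)) (le_td : (t * d <= m)%N).
Local Notation y i := ('X_(widen_ord (leqnSn t) i) + 'X_(@ord_max t) : {mpoly 'F_2[t.+1]}).

Lemma prod_addXmax_notin_trunc_ideal : ~ in_trunc_ideal m (\prod_(i < t) y i ^+ (m + d)).
Proof.
apply/trunc_idealPn; exists [multinom if (i < t)%N then m else (t * d)%N | i < t.+1].
  by move=> i; rewrite mnmE; case: ifP.
by rewrite mcoeff_prod_addXmax F2_natr odd_bin expr1n oner_neq0.
Qed.

Lemma zcl_witness_prod_addXmax : zcl_witness m t.+1 (t * (m + d)).
Proof.
pose l := flatten [seq nseq (m + d) (y i) | i <- enum 'I_t].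
have -> : (t * (m + d) = size l)%N.
  rewrite size_flatten /shape -map_comp (eq_map (g := fun=> (m + d)%N)) => [|i].
    by rewrite sumnE big_map big_enum sum_nat_const card_ord.
  exact: size_nseq.
apply: zcl_witness_seq => [p /flattenP [_ /mapP [i _ ->]]|].
  by rewrite mem_nseq => /andP [_ /eqP ->]; apply: zero_divisor_addX.
rewrite big_flatten /= big_map; under eq_bigr do rewrite big_nseq iter_mulr_1.
by rewrite big_enum; apply: prod_addXmax_notin_trunc_ideal.
Qed.

End ProductWitness.

Lemma G_le_trailing_ones m e s :
  (m %% 2 ^ e.+1 = 2 ^ e - 1)%N -> ((m + 1) %/ 2 ^ e <= s)%N -> (G m s <= 2 ^ e - 1)%N.
Proof.
move=> m_mod; have [m1 odd_sigma] := trailing_ones_decomp m_mod.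
move: m1 odd_sigma; case: ((m + 1) %/ 2 ^ e)%N => // t m1 _ le_ts.
have le_td : (t * 2 ^ e <= m)%N by move: m1; rewrite mulSn; lia.
case: s le_ts => // s le_ts; apply: leq_trans (G_antimono m (le_ts : t <= s)%N) _.
have := leq_zcl (zcl_witness_prod_addXmax (odd_bin_trailing_ones m_mod) le_td).
by rewrite /G mulSn mulnDr; move: m1; rewrite mulSn; lia.
Qed.


Section ShearBound.
Variables (m n : nat).
Local Notation MP := {mpoly 'F_2[n.+1]}.
Local Notation x0 := (@ord0 n).

Definition shear_var (i : 'I_n.+1) : MP := if i == x0 then 'X_i else 'X_i + 'X_x0.
Local Notation shear := (mmap (@mpolyC n.+1 'F_2) shear_var).

Definition axis_var (i : 'I_n.+1) : {poly 'F_2} := if i == x0 then 'X else 0.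
Local Notation axis_rep := (mmap (@polyC 'F_2) axis_var).

Lemma shear_shear_var i : shear (shear_var i) = 'X_i.
Proof.
rewrite {2}/shear_var; case: eqP => [->|/eqP i_x0].
  by rewrite mmapX mmap1U /shear_var eqxx.
rewrite rmorphD /= !mmapX !mmap1U /shear_var eqxx (negbTE i_x0).
by rewrite -addrA addrr_pchar2 ?addr0 // pchar_F2_lalg.
Qed.

Lemma shearK : involutive shear.
Proof.
move=> p; rewrite (mmap_mmapC (h' := tnth [tuple 'X_i | i < n.+1])) => [|i].
  exact: comp_mpoly_id.
by rewrite tnth_map tnth_ord_tuple shear_shear_var.
Qed.

Lemma trunc_idealXn (i : 'I_n.+1) : in_trunc_ideal m ('X_i ^+ m.+1 : MP).
Proof.
by rewrite mpolyXn; apply: (trunc_idealX (i := i)); rewrite mulmnE mnm1E eqxx mul1n.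
Qed.

Lemma shear_trunc_ideal e :
  m.+1 = (2 ^ e)%N -> forall p : MP, in_trunc_ideal m p -> in_trunc_ideal m (shear p).
Proof.
move=> m1 p [q ->]; rewrite rmorph_sum /=; apply: trunc_ideal_sum => i.
rewrite rmorphM rmorphXn /= mmapX mmap1U; apply: trunc_idealMl.
rewrite /shear_var; case: eqP => _; first exact: trunc_idealXn.
rewrite m1 exprDn_pchar; first by rewrite -m1; apply: trunc_idealD; apply: trunc_idealXn.
by rewrite pnatX (pnatE _ (isT : prime 2)) pchar_F2_lalg.
Qed.

Definition offaxis_deg (nu : 'X_{1..n.+1}) := (\sum_(i < n) nu (lift x0 i))%N.

Lemma offaxis_deg_eq0 nu : (offaxis_deg nu == 0%N) = (nu == U_(x0) *+ nu x0)%MM.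
Proof.
rewrite /offaxis_deg sum_nat_eq0; apply/forallP/eqP => [nu0|-> i]; last first.
  by rewrite mulmnE mnm1E (negbTE (neq_lift _ _)) mul0n.
apply/mnmP => i; rewrite mulmnE mnm1E.
case: (unliftP x0 i) => [j ->|->]; last by rewrite eqxx mul1n.
by rewrite (negbTE (neq_lift _ _)) mul0n; apply/eqP/nu0.
Qed.

Lemma mmap1_axis nu :
  mmap1 axis_var nu = if offaxis_deg nu == 0%N then 'X^(nu x0) else 0.
Proof.
rewrite /mmap1 big_ord_recl /axis_var eqxx.
under eq_bigr do rewrite eq_sym (negbTE (neq_lift _ _)).
by rewrite prodrXr expr0n; case: eqP; rewrite ?mulr1 ?mulr0.
Qed.

Lemma coef_axis_rep q j : (axis_rep q)`_j = q@_(U_(x0) *+ j).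
Proof.
rewrite coef_sum [in RHS](mpolyE q) raddf_sum /=; apply: eq_bigr => nu _.
rewrite coefCM mmap1_axis mcoeffZ mcoeffX offaxis_deg_eq0; congr (_ * _).
case: ifP => [/eqP nuE|nu_off]; last first.
  by rewrite coef0; case: eqP => // nuE; rewrite nuE mulmnE mnm1E eqxx mul1n eqxx in nu_off.
rewrite coefXn; congr ((nat_of_bool _)%:R); apply/eqP/eqP => [->|->] //.
by rewrite mulmnE mnm1E eqxx mul1n.
Qed.

Lemma axis_rep_shear p : axis_rep (shear p) = diag_rep p.
Proof.
apply: mmap_mmapC => i; rewrite /shear_var; case: eqP => [->|/eqP i_x0].
  by rewrite mmapX mmap1U /axis_var eqxx.
by rewrite rmorphD /= !mmapX !mmap1U /axis_var eqxx (negbTE i_x0) add0r.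
Qed.

Definition offaxis_ge k (q : MP) :=
  forall nu, nu \in msupp q -> (k <= offaxis_deg nu)%N \/ exists i, (m < nu i)%N.

Lemma offaxis_geM a b p q :
  offaxis_ge a p -> offaxis_ge b q -> offaxis_ge (a + b) (p * q).
Proof.
move=> pa qb nu /msuppM_le /allpairsP [[mu1 mu2] /= [mu1p mu2q ->]].
have [a_le|[i lt_m]] := pa _ mu1p; last first.
  by right; exists i; rewrite mnmDE ltn_addr.
have [b_le|[i lt_m]] := qb _ mu2q; last first.
  by right; exists i; rewrite mnmDE ltn_addl.
by left; rewrite /offaxis_deg; under eq_bigr do rewrite mnmDE; rewrite big_split leq_add.
Qed.

Lemma offaxis_ge_prod k (F : 'I_k -> MP) :
  (forall i, offaxis_ge 1 (F i)) -> offaxis_ge k (\prod_(i < k) F i).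
Proof.
elim: k F => [|k IHk] F F1; first by rewrite big_ord0 => nu _; left.
rewrite big_ord_recr.
have := offaxis_geM (IHk (fun i => F (widen_ord (leqnSn k) i)) (fun i => F1 _)) (F1 ord_max).
by rewrite addn1.
Qed.

Lemma zero_divisor_offaxis_ge p : zero_divisor m p -> offaxis_ge 1 (shear p).
Proof.
rewrite /zero_divisor -axis_rep_shear => /dvdpP [r r_eq] nu nu_supp.
case: (posnP (offaxis_deg nu)) => [/eqP|]; last by left.
rewrite offaxis_deg_eq0 => /eqP nuE; right; exists x0; rewrite ltnNge; apply/negP => le_m.
by move: nu_supp; rewrite nuE mcoeff_msupp -coef_axis_rep r_eq coefMXn ltnS le_m eqxx.
Qed.

Lemma offaxis_ge_trunc_ideal k q : (n * m < k)%N -> offaxis_ge k q -> in_trunc_ideal m q.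
Proof.
move=> lt_k qk; apply/trunc_idealP => mu le_mu; apply: memN_msupp_eq0; apply/negP.
move=> /qk [le_off|[i]]; last by have := le_mu i; lia.
suff : (offaxis_deg mu <= n * m)%N by lia.
rewrite /offaxis_deg -[X in (_ <= X * _)%N]card_ord -sum_nat_const.
by apply: leq_sum => i _; apply: le_mu.
Qed.

Lemma zcl_le_pow2 e : m.+1 = (2 ^ e)%N -> (zcl m n.+1 <= n * m)%N.
Proof.
move=> m1; apply: zcl_leq_bound => k [f [zf prodN0]]; rewrite leqNgt; apply/negP => lt_k.
apply: prodN0; rewrite -[\prod_i f i]shearK; apply: (shear_trunc_ideal m1).
rewrite rmorph_prod; apply: (offaxis_ge_trunc_ideal lt_k); apply: offaxis_ge_prod => i.
exact: zero_divisor_offaxis_ge.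
Qed.

End ShearBound.

Lemma G_ge_pow2 m e s : m.+1 = (2 ^ e)%N -> (m <= G m s.+1)%N.
Proof. by move=> m1; rewrite /G mulSn; have := zcl_le_pow2 s m1; lia. Qed.

Theorem theorem4p5 (m e : nat) :
  (1 <= m)%N ->
  (m %% 2 ^ e.+1 = 2 ^ e - 1)%N ->
  [/\ (exists g : nat,
         [/\ G_stable m g, (g <= 2 ^ e - 1)%N &
             (~~ odd m \/ m = (2 ^ e - 1)%N -> g = (2 ^ e - 1)%N)]),
      (forall s : nat, (maxn ((m + 1) %/ 2 ^ e) 2 <= s)%N -> (G m s <= 2 ^ e - 1)%N) &
      ((2 ^ e - 1 < m)%N ->
       let sigma := ((m + 1) %/ 2 ^ e)%N in
       (* variables x_1..x_sigma are 'X_0 .. 'X_t with t = sigma - 1 *)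
       let t := sigma.-1 in
       [/\ (2 < sigma)%N,
           (forall i : 'I_t,
              @zero_divisor m t.+1
                (('X_(widen_ord (leqnSn t) i) + 'X_(@ord_max t)) ^+ (m + 2 ^ e))) &
           ~ @in_trunc_ideal m t.+1
               (\prod_(i < t)
                  ('X_(widen_ord (leqnSn t) i) + 'X_(@ord_max t)
                     : {mpoly 'F_2[t.+1]}) ^+ (m + 2 ^ e))])].
Proof.
move=> m_pos m_mod; have [m1 odd_sigma] := trailing_ones_decomp m_mod.
have [s0 G_const] := G_eventually_const m; pose s1 := maxn s0 ((m + 1) %/ 2 ^ e).
have G_s0 : G m s0 = G m s1.+1 by rewrite [RHS]G_const //; apply/leqW/leq_maxl.
have G_le_s1 : (G m s1.+1 <= 2 ^ e - 1)%N.
  by apply: G_le_trailing_ones => //; apply/leqW/leq_maxr.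
split=> [|s|lt_m].
- exists (G m s0); rewrite G_s0; split=> //; first by exists s0; rewrite -G_s0.
  case=> [m_even|m_ones].
    have : odd (m + 1) by rewrite addn1 /= m_even.
    by rewrite m1 oddM oddX orbF => /andP [_ /eqP e0]; move: G_le_s1; rewrite e0; lia.
  have m1' : m.+1 = (2 ^ e)%N by rewrite m_ones; lia.
  by have := G_ge_pow2 s1 m1'; lia.
- by rewrite geq_max => /andP [le_s _]; apply: G_le_trailing_ones.
have [sigma_gt2 le_td] :
    (2 < (m + 1) %/ 2 ^ e)%N /\ (((m + 1) %/ 2 ^ e).-1 * 2 ^ e <= m)%N.
  by move: m1 odd_sigma; case: ((m + 1) %/ 2 ^ e)%N => [|[|[|s]]] //=; rewrite ?mulSn; lia.
split=> // [i|].
  by apply: zero_divisorXn; [exact: zero_divisor_addX | rewrite addn_gt0 m_pos].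
exact: prod_addXmax_notin_trunc_ideal (odd_bin_trailing_ones m_mod) le_td.
Qed.
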